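(* Let $f:\mathbb{R}^n\to\mathbb{R}$ be continuously differentiable, and let $t\mapsto w^t\in\mathbb{R}^n$ be continuously differentiable in $t$ and satisfy the Cauchy-Simplex gradient flow $$\frac{dw^t}{dt} = -\beta\, w^t\odot\Big(\nabla f(w^t) - \big(w^t\cdot\nabla f(w^t)\big)\mathbb{1}\Big)$$ for a constant $\beta>0$. Then, as long as $w^t\in\operatorname{int}(\Delta^n)$ (i.e. $\sum_i w^t_i=1$ and $w^t_i>0$ for all $i$), $t\mapsto f(w^t)$ is a decreasing (non-increasing) function of time; more precisely $\frac{d}{dt}f(w^t)\le 0$.
   Context: $\Delta^n=\{w\in\mathbb{R}^n : \sum_i w_i=1,\ w_i\ge 0\}$ is the probability simplex and $\operatorname{int}(\Delta^n)$ denotes the points of $\Delta^n$ with all coordinates strictly positive. $\odot$ denotes componentwise multiplication, $\mathbb{1}$ the all-ones vector, and $\nabla f$ the gradient of $f$ with respect to $w$. *)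

From HB Require Import structures.
From mathcomp Require Import all_boot all_order all_algebra.
From mathcomp Require Import all_classical all_reals all_analysis.
Set Implicit Arguments. Unset Strict Implicit. Unset Printing Implicit Defensive.
Import Order.TTheory GRing.Theory Num.Theory.
Import numFieldNormedType.Exports.
Local Open Scope ring_scope.

(* Vectors of R^n are row vectors 'rV[R]_n; coordinate i of w is w 0 i. *)

Definition basis_vec {R : realType} {n : nat} (i : 'I_n) : 'rV[R]_n :=
  delta_mx 0 i.

Definition grad {R : realType} {n : nat} (f : 'rV[R]_n -> R) (x : 'rV[R]_n)
  : 'rV[R]_n := \row_i ('D_(basis_vec i) f x).

Definition hadamard {R : realType} {n : nat} (u v : 'rV[R]_n) : 'rV[R]_n :=
  \row_i (u 0 i * v 0 i).

Definition dotv {R : realType} {n : nat} (u v : 'rV[R]_n) : R :=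
  \sum_(i < n) u 0 i * v 0 i.

Definition ones {R : realType} {n : nat} : 'rV[R]_n := const_mx 1.

Definition in_int_simplex {R : realType} {n : nat} (w : 'rV[R]_n) : Prop :=
  \sum_(i < n) w 0 i = 1 /\ (forall i : 'I_n, 0 < w 0 i).

Definition C1_field {R : realType} {n : nat} (f : 'rV[R]_n -> R) : Prop :=
  (forall x, differentiable f x) /\
  (forall i : 'I_n, continuous (fun x => 'D_(basis_vec i) f x)).

Definition C1_curve {R : realType} {n : nat} (w : R -> 'rV[R]_n) : Prop :=
  (forall t, derivable w t 1) /\ continuous (derive1 w).

Definition cs_field {R : realType} {n : nat} (beta : R) (f : 'rV[R]_n -> R)
  (w : 'rV[R]_n) : 'rV[R]_n :=
  - (beta *: hadamard w (grad f w - dotv w (grad f w) *: ones)).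

From HB Require Import structures.
From mathcomp Require Import all_boot all_order all_algebra.
From mathcomp Require Import all_classical all_reals all_analysis.
From mathcomp Require Import ring.
Import Order.TTheory GRing.Theory Num.Theory.
Import numFieldNormedType.Exports.
Local Open Scope ring_scope.
Local Open Scope classical_set_scope.

(* By the chain rule, d/dt f(w^t) = grad f(w^t) . dw^t/dt, and along the
   Cauchy-Simplex field this is -beta times the variance of the gradient
   entries under the probability weights w^t, hence nonpositive.  The
   monotonicity of f(w^t) then follows from the mean value theorem. *)

Section Gradient.
Variables (R : realType) (n : nat).

Lemma diff_dotv_grad (f : 'rV[R]_n -> R) (x v : 'rV[R]_n) :
  differentiable f x -> 'd f x v = dotv (grad f x) v.
Proof.
move=> dfx; rewrite [in LHS](row_sum_delta v) linear_sum /dotv.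
apply: eq_bigr => i _; rewrite linearZ /= -deriveE // mxE mulrC.
by rewrite [LHS]/GRing.scale.
Qed.

Lemma derive1_comp_grad (f : 'rV[R]_n -> R) (w : R -> 'rV[R]_n) (t : R) :
  differentiable f (w t) -> derivable w t 1 ->
  derive1 (f \o w) t = dotv (grad f (w t)) (derive1 w t).
Proof.
move=> dfw /derivable1_diffP dw.
rewrite derive1E'; last exact: differentiable_comp.
by rewrite diff_comp //= -derive1E' // diff_dotv_grad.
Qed.

End Gradient.

Lemma weighted_variance_ge0 (R : realType) (n : nat) (w g : 'rV[R]_n) :
  \sum_(i < n) w 0 i = 1 -> (forall i, 0 <= w 0 i) ->
  0 <= dotv g (hadamard w (g - dotv w g *: ones)).
Proof.
move=> sw1 w_ge0; set s := dotv w g.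
have centered : \sum_(i < n) w 0 i * (g 0 i - s) = 0.
  under eq_bigr do rewrite mulrBr.
  by rewrite sumrB -mulr_suml sw1 mul1r subrr.
have -> : dotv g (hadamard w (g - s *: ones)) =
    \sum_(i < n) w 0 i * (g 0 i - s) ^+ 2 +
    s * \sum_(i < n) w 0 i * (g 0 i - s).
  rewrite mulr_sumr -big_split /=; apply: eq_bigr => i _; rewrite !mxE; ring.
rewrite centered mulr0 addr0; apply: sumr_ge0 => i _.
by rewrite mulr_ge0 ?sqr_ge0.
Qed.

Lemma dotv_grad_cs_field_le0 (R : realType) (n : nat) (beta : R)
    (f : 'rV[R]_n -> R) (x : 'rV[R]_n) :
  0 <= beta -> in_int_simplex x -> dotv (grad f x) (cs_field beta f x) <= 0.
Proof.
move=> beta_ge0 [sx1 x_gt0].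
have -> : dotv (grad f x) (cs_field beta f x) =
    - (beta * dotv (grad f x) (hadamard x (grad f x - dotv x (grad f x) *: ones))).
  rewrite mulr_sumr -sumrN; apply: eq_bigr => i _; rewrite !mxE; ring.
rewrite oppr_le0 mulr_ge0 // weighted_variance_ge0 // => i.
exact: ltW.
Qed.

Theorem theorem4p1 (R : realType) (n : nat) (beta : R)
    (f : 'rV[R]_n -> R) (w : R -> 'rV[R]_n) :
  0 < beta ->
  C1_field f ->
  C1_curve w ->
  (forall t, derive1 w t = cs_field beta f (w t)) ->
  (* pointwise: d/dt f(w^t) exists and is <= 0 whenever w^t ∈ int(Δ^n) *)
  (forall t, in_int_simplex (w t) ->
     derivable (f \o w) t 1 /\ derive1 (f \o w) t <= 0) /\
  (* hence f(w^t) is non-increasing on any time interval where w^t stays in int(Δ^n) *)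
  (forall a b : R, a <= b ->
     (forall t, a <= t <= b -> in_int_simplex (w t)) ->
     f (w b) <= f (w a)).
Proof.
move=> beta_gt0 [df _] [dw _] flow.
have dfw t : differentiable (f \o w) t.
  by apply: differentiable_comp => //; exact/derivable1_diffP.
have descent t : in_int_simplex (w t) -> derive1 (f \o w) t <= 0.
  move=> wt_in; rewrite derive1_comp_grad // flow.
  exact: dotv_grad_cs_field_le0 (ltW beta_gt0) wt_in.
split=> [t wt_in|a b ab w_in]; first by split; [exact/derivable1_diffP|exact: descent].
have f_w_nincr : {in `[a, b]%R &, {homo f \o w : x y /~ x <= y}}.
  apply: ler0_derive1_le_cc.
  - by move=> t _; exact/derivable1_diffP.
  - move=> t; rewrite in_itv /= => /andP[a_t t_b]; apply/descent/w_in.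
    by rewrite !ltW.
  - by apply: continuous_subspaceT => t; exact: differentiable_continuous.
apply: f_w_nincr => //; rewrite in_itv /= ?lexx ?ab //.
Qed.
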